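(* Let $(G,\mathcal{B}_1,\mathcal{B}_2)$ be a Rota-Baxter system of groups whose cocycle $\Phi(a)=\mathcal{B}_1(a)\mathcal{B}_2(a)$ is bijective. Then $\widetilde{\mathcal{B}}:G\to G$, $\widetilde{\mathcal{B}}(a)=\mathcal{B}_1(\Phi^{-1}(a))$, is a Rota-Baxter operator of weight $-1$, and $\mathcal{B}:G\to G$, $\mathcal{B}(a)=\mathcal{B}_2(\Phi^{-1}(a))^{-1}$, is a Rota-Baxter operator of weight $1$.
   Context: A Rota-Baxter system of groups is a triple $(G,\mathcal{B}_1,\mathcal{B}_2)$ where $G$ is a group and $\mathcal{B}_1,\mathcal{B}_2:G\to G$ are maps such that for all $a,b\in G$: $\mathcal{B}_1(a)\mathcal{B}_1(b)=\mathcal{B}_1(\mathcal{B}_1(a)b\mathcal{B}_2(a))$ and $\mathcal{B}_2(b)\mathcal{B}_2(a)=\mathcal{B}_2(\mathcal{B}_1(a)b\mathcal{B}_2(a))$. A map $\mathcal{B}:G\to G$ is a Rota-Baxter operator of weight $1$ if $\mathcal{B}(a)\mathcal{B}(b)=\mathcal{B}(a\mathcal{B}(a)b\mathcal{B}(a)^{-1})$ for all $a,b\in G$; a map $\mathcal{C}:G\to G$ is a Rota-Baxter operator of weight $-1$ if $\mathcal{C}(a)\mathcal{C}(b)=\mathcal{C}(\mathcal{C}(a)b\mathcal{C}(a)^{-1}a)$ for all $a,b\in G$. *)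

From mathcomp Require Import ssreflect ssrfun ssrbool.
Set Implicit Arguments. Unset Strict Implicit. Unset Printing Implicit Defensive.

Record is_group (G : Type) (mul : G -> G -> G) (one : G) (inv : G -> G) : Prop := {
  grp_assoc : forall a b c, mul a (mul b c) = mul (mul a b) c;
  grp_mul1g : forall a, mul one a = a;
  grp_mulg1 : forall a, mul a one = a;
  grp_mulVg : forall a, mul (inv a) a = one;
  grp_mulgV : forall a, mul a (inv a) = one }.

Definition RB_system (G : Type) (mul : G -> G -> G) (B1 B2 : G -> G) : Prop :=
  forall a b : G,
    mul (B1 a) (B1 b) = B1 (mul (mul (B1 a) b) (B2 a)) /\
    mul (B2 b) (B2 a) = B2 (mul (mul (B1 a) b) (B2 a)).

Definition RB_op_weight1 (G : Type) (mul : G -> G -> G) (inv : G -> G) (B : G -> G) : Prop :=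
  forall a b : G, mul (B a) (B b) = B (mul (mul (mul a (B a)) b) (inv (B a))).

Definition RB_op_weight_neg1 (G : Type) (mul : G -> G -> G) (inv : G -> G) (C : G -> G) : Prop :=
  forall a b : G, mul (C a) (C b) = C (mul (mul (mul (C a) b) (inv (C a))) a).

From mathcomp Require Import ssreflect ssrfun ssrbool.

Set Implicit Arguments.
Unset Strict Implicit.
Unset Printing Implicit Defensive.

(* The cocycle Phi a = B1 a B2 a intertwines the twisted product: the two
   Rota-Baxter system identities give Phi (B1 a b B2 a) = B1 a Phi b B2 a.
   Writing a = Phi x, b = Phi y, the arguments of both candidate operators on
   the right of the Rota-Baxter identities collapse to B1 x Phi y B2 x, i.e. to
   Phi (B1 x y B2 x), and the system identities finish the job. *)

Section GroupFacts.

Variables (G : Type) (mul : G -> G -> G) (one : G) (inv : G -> G).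
Hypothesis grp : is_group mul one inv.

Lemma mulgK (x y : G) : mul (mul x y) (inv y) = x.
Proof. by rewrite -(grp_assoc grp) (grp_mulgV grp) (grp_mulg1 grp). Qed.

Lemma mulgVK (x y : G) : mul (mul x (inv y)) y = x.
Proof. by rewrite -(grp_assoc grp) (grp_mulVg grp) (grp_mulg1 grp). Qed.

Lemma invgK (x : G) : inv (inv x) = x.
Proof. by rewrite -[LHS](mulgVK _ x) (grp_mulVg grp) (grp_mul1g grp). Qed.

Lemma invMg (x y : G) : inv (mul x y) = mul (inv y) (inv x).
Proof.
rewrite -[RHS](grp_mulg1 grp) -((grp_mulgV grp) (mul x y)) !(grp_assoc grp).
by rewrite -[mul (mul (inv y) (inv x)) x](grp_assoc grp) (grp_mulVg grp)
  (grp_mulg1 grp) (grp_mulVg grp) (grp_mul1g grp).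
Qed.

End GroupFacts.

Definition RB_cocycle (G : Type) (mul : G -> G -> G) (B1 B2 : G -> G) (a : G) : G :=
  mul (B1 a) (B2 a).

Section RotaBaxterSystem.

Variables (G : Type) (mul : G -> G -> G) (one : G) (inv : G -> G) (B1 B2 : G -> G).
Hypothesis grp : is_group mul one inv.
Hypothesis RB : RB_system mul B1 B2.

Local Notation Phi := (RB_cocycle mul B1 B2).

Lemma RB_cocycle_twist (a b : G) :
  Phi (mul (mul (B1 a) b) (B2 a)) = mul (mul (B1 a) (Phi b)) (B2 a).
Proof.
have [E1 E2] := RB a b.
by rewrite /RB_cocycle -E1 -E2 !(grp_assoc grp).
Qed.

Variable Phiinv : G -> G.
Hypothesis PhiK : cancel Phi Phiinv.
Hypothesis PhiVK : cancel Phiinv Phi.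

Lemma RB_system_weight_neg1 : RB_op_weight_neg1 mul inv (fun a => B1 (Phiinv a)).
Proof.
move=> a b; rewrite -(PhiVK a) -(PhiVK b); move: (Phiinv a) (Phiinv b) => x y.
rewrite !PhiK [Phi x]/RB_cocycle (grp_assoc grp) (mulgVK grp) -RB_cocycle_twist PhiK.
by case: (RB x y).
Qed.

Lemma RB_system_weight1 : RB_op_weight1 mul inv (fun a => inv (B2 (Phiinv a))).
Proof.
move=> a b; rewrite -(PhiVK a) -(PhiVK b); move: (Phiinv a) (Phiinv b) => x y.
rewrite !PhiK [Phi x]/RB_cocycle (invgK grp) (mulgK grp) -RB_cocycle_twist PhiK.
by case: (RB x y) => _ <-; rewrite (invMg grp).
Qed.

End RotaBaxterSystem.

Theorem proposition3p11 (G : Type) (mul : G -> G -> G) (one : G) (inv : G -> G)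
    (B1 B2 : G -> G) (Phiinv : G -> G) :
  is_group mul one inv ->
  RB_system mul B1 B2 ->
  cancel (fun a => mul (B1 a) (B2 a)) Phiinv ->
  cancel Phiinv (fun a => mul (B1 a) (B2 a)) ->
  RB_op_weight_neg1 mul inv (fun a => B1 (Phiinv a)) /\
  RB_op_weight1 mul inv (fun a => inv (B2 (Phiinv a))).
Proof.
move=> grp RB PhiK PhiVK.
split; [exact: (RB_system_weight_neg1 grp RB PhiK PhiVK)
       | exact: (RB_system_weight1 grp RB PhiK PhiVK)].
Qed.
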